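(* Let $\mathbb{A}=S^1\times\mathbb{R}$ and let $T:\mathbb{A}\to\mathbb{A}$ be an exact symplectic map which is a twist map with respect to two sets of symplectic coordinates $(q,p)$ and $(x,y)$ on $\mathbb{A}$, with $C^2$ generating functions $H(q,q')$ and $G(x,x')$ respectively, satisfying $H_{12}>0$ and $G_{12}>0$. Assume the geometric assumption: for every $z\in\mathcal{M}_H$ the vector $\frac{\partial}{\partial y}(z)$ lies in the cone $N_H(z)$, and for every $z\in\mathcal{M}_G$ the vector $\frac{\partial}{\partial p}(z)$ lies in the cone $N_G(z)$. Then $\mathcal{M}_H=\mathcal{M}_G$.
   Context: Subscripts $1,2$ denote partial derivatives in the first/second variable. ''Symplectic coordinates'' means both coordinate systems induce the same symplectic form ($dq\wedge dp=dx\wedge dy$). Generating function convention (on lifts): $T(q,p)=(q',p')$ iff $p=-H_1(q,q')$, $p'=H_2(q,q')$; similarly $T(x,y)=(x',y')$ iff $y=-G_1(x,x')$, $y'=G_2(x,x')$. For $H$: a configuration is a sequence $\{q_n\}_{n\in\mathbb Z}$ with $H_2(q_{n-1},q_n)+H_1(q_n,q_{n+1})=0$ for all $n$ (equivalently, the $q$-coordinates of an orbit $\{(q_n,p_n)\}$ of $T$). It is an m-configuration if for any integers $M<N$ the segment $(q_{M+1},\dots,q_{N-1})$ is a local maximum of $\sum_{n=M}^{N-1}H(x_n,x_{n+1})$ with fixed end points $x_M=q_M$, $x_N=q_N$; the corresponding orbit is an m-orbit, and $\mathcal{M}_H\subseteq\mathbb{A}$ denotes the set swept by all m-orbits for $H$.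 Analogously $\mathcal{M}_G$ is defined using $G$ and the coordinates $(x,y)$. Cones: for a point $z=(q_0,p_0)$ with orbit $\{(q_n,p_n)\}$ satisfying $H_{22}(q_{-1},q_0)<-H_{11}(q_0,q_1)$ (this holds at every point of $\mathcal{M}_H$), write tangent vectors in $T_z\mathbb{A}$ as $(\delta q,\delta p)$; the two lines through the origin with slopes $-H_{11}(q_0,q_1)$ and $H_{22}(q_{-1},q_0)$ divide $T_z\mathbb{A}$ into four cones, denoted $N_H,W_H,S_H,E_H$ in clockwise order, where $N_H$ is the one containing the vertical vector $\frac{\partial}{\partial p}$; explicitly $N_H=\{(\delta q,\delta p):\delta p>\max(-H_{11}(q_0,q_1)\delta q,\ H_{22}(q_{-1},q_0)\delta q)\}$. The cone $N_G$ is defined analogously using $G$, the coordinates $(x,y)$ and the vertical vector $\frac{\partial}{\partial y}$. *)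

From Stdlib Require Import Reals ZArith.
From Coquelicot Require Import Coquelicot.
Open Scope R_scope.

Definition pd1 (f : R -> R -> R) (a b : R) : R := Derive (fun t => f t b) a.
Definition pd2 (f : R -> R -> R) (a b : R) : R := Derive (fun t => f a t) b.

Definition jcont (f : R -> R -> R) : Prop :=
  forall a b eps, 0 < eps -> exists delta, 0 < delta /\
    forall a' b', Rabs (a' - a) < delta -> Rabs (b' - b) < delta ->
      Rabs (f a' b' - f a b) < eps.

Definition isC1 (f : R -> R -> R) : Prop :=
  (forall a b, ex_derive (fun t => f t b) a /\ ex_derive (fun t => f a t) b)
  /\ jcont f /\ jcont (pd1 f) /\ jcont (pd2 f).

Definition isC2 (f : R -> R -> R) : Prop := isC1 f /\ isC1 (pd1 f) /\ isC1 (pd2 f).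

Definition cp1 (Phi : R * R -> R * R) (a b : R) : R := fst (Phi (a, b)).
Definition cp2 (Phi : R * R -> R * R) (a b : R) : R := snd (Phi (a, b)).

Fixpoint action (H : R -> R -> R) (x : Z -> R) (M : Z) (L : nat) : R :=
  match L with
  | O => 0
  | S L' => action H x M L' + H (x (M + Z.of_nat L')%Z) (x (M + Z.of_nat L' + 1)%Z)
  end.

Definition is_config (H : R -> R -> R) (q : Z -> R) : Prop :=
  forall n : Z, pd2 H (q (n - 1)%Z) (q n) + pd1 H (q n) (q (n + 1)%Z) = 0.

Definition is_mconfig (H : R -> R -> R) (q : Z -> R) : Prop :=
  is_config H q /\
  forall M N : Z, (M < N)%Z ->
    exists eps, 0 < eps /\
      forall x : Z -> R, x M = q M -> x N = q N ->
        (forall n : Z, (M < n < N)%Z -> Rabs (x n - q n) < eps) ->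
        action H x M (Z.to_nat (N - M)) <= action H q M (Z.to_nat (N - M)).

(* The set swept by all m-orbits, as a (translation-saturated) subset of the
   lift R^2 of the annulus: points (q_n + j, p_n), p_n = -H_1(q_n+j, q_{n+1}+j). *)
Definition swept (H : R -> R -> R) (z : R * R) : Prop :=
  exists q : Z -> R, is_mconfig H q /\
    exists n j : Z,
      z = (q n + IZR j, - pd1 H (q n + IZR j) (q (n + 1)%Z + IZR j)).

Definition in_N (H : R -> R -> R) (qm q0 q1 : R) (v : R * R) : Prop :=
  snd v > Rmax (- pd1 (pd1 H) q0 q1 * fst v) (pd2 (pd2 H) qm q0 * fst v).

(* An orbit is an m-orbit iff on every segment its configuration carries a
   positive Jacobi field: such a field dominates the second variation of the
   action (Picone), so the action is concave along segments; conversely, a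
   nonpositive second variation keeps the Jacobi field started at (0, 1)
   positive (Sturm).  The coordinate change maps H-orbits to G-orbits and,
   linearised, H-Jacobi fields to G-Jacobi fields; the new field is the
   x-component [d2 dq - d1 dp] of the image of [(dq, dp)], where [(d1, d2)]
   is [d/dy] in (q, p)-coordinates, and the cone condition [d/dy in N_H] is
   exactly what keeps it positive.  Exchanging H and G gives the converse. *)

From Stdlib Require Import Reals ZArith.
From Coquelicot Require Import Coquelicot.
From Stdlib Require Import Lia Lra Psatz FunctionalExtensionality.
Open Scope R_scope.

Lemma pd1_derivable f a b : ex_derive (fun t => f t b) a ->
  derivable_pt_lim (fun t => f t b) a (pd1 f a b).
Proof. intros H. apply is_derive_Reals, Derive_correct, H. Qed.

Lemma pd2_derivable f a b : ex_derive (fun t => f a t) b ->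
  derivable_pt_lim (fun t => f a t) b (pd2 f a b).
Proof. intros H. apply is_derive_Reals, Derive_correct, H. Qed.

Lemma isC1_ex_derive1 f : isC1 f -> forall a b, ex_derive (fun t => f t b) a.
Proof. intros [E _] a b. exact (proj1 (E a b)). Qed.

Lemma isC1_ex_derive2 f : isC1 f -> forall a b, ex_derive (fun t => f a t) b.
Proof. intros [E _] a b. exact (proj2 (E a b)). Qed.

Lemma isC2_isC1 f : isC2 f -> isC1 f.
Proof. intros [h _]; exact h. Qed.

Lemma isC2_pd1 f : isC2 f -> isC1 (pd1 f).
Proof. intros [_ [h _]]; exact h. Qed.

Lemma isC2_pd2 f : isC2 f -> isC1 (pd2 f).
Proof. intros [_ [_ h]]; exact h. Qed.

Lemma derivable_pt_lim_eq f t l l' :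
  derivable_pt_lim f t l -> l = l' -> derivable_pt_lim f t l'.
Proof. intros H <-; exact H. Qed.

Lemma derivable_pt_lim_mult_r f t l k :
  derivable_pt_lim f t l -> derivable_pt_lim (fun s => f s * k) t (l * k).
Proof.
  intros H. eapply derivable_pt_lim_eq.
  - exact (derivable_pt_lim_mult f (fun _ => k) t l 0 H (derivable_pt_lim_const k t)).
  - cbv beta. ring.
Qed.

Lemma derivable_pt_lim_ext_unique (f g : R -> R) x l1 l2 : (forall t, f t = g t) ->
  derivable_pt_lim f x l1 -> derivable_pt_lim g x l2 -> l1 = l2.
Proof.
  intros E H1 H2. apply functional_extensionality in E. subst.
  eapply uniqueness_limite; eauto.
Qed.

Lemma derivable_pt_lim_affine p w t : derivable_pt_lim (fun s => p + s * w) t w.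
Proof. apply is_derive_Reals. auto_derive; auto. ring. Qed.

Lemma MVT_abs (g dg : R -> R) a u :
  (forall s, derivable_pt_lim g s (dg s)) ->
  exists c, Rabs (c - a) <= Rabs (u - a) /\ g u - g a = dg c * (u - a).
Proof.
  intros Hg. destruct (Rtotal_order a u) as [Hlt | [<- | Hgt]].
  - destruct (MVT_cor2 g dg a u Hlt (fun c _ => Hg c)) as [c [Hc1 Hc2]].
    exists c. split; [|lra]. rewrite !Rabs_right; lra.
  - exists a. split; [lra | ring].
  - destruct (MVT_cor2 g dg u a Hgt (fun c _ => Hg c)) as [c [Hc1 Hc2]].
    exists c. split; [|lra]. rewrite !Rabs_left1; lra.
Qed.

(* Mean value theorem in each variable separately. *)
Lemma isC1_differentiable f : isC1 f -> forall a b,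
  differentiable_pt_lim f a b (pd1 f a b) (pd2 f a b).
Proof.
  intros [Hex [_ [H1 H2]]] a b eps.
  assert (He2 : 0 < eps / 2) by (destruct eps; simpl; lra).
  destruct (H1 a b (eps / 2) He2) as [d1 [Hd1 K1]].
  destruct (H2 a b (eps / 2) He2) as [d2 [Hd2 K2]].
  assert (Hd : 0 < Rmin d1 d2) by (apply Rmin_pos; lra).
  exists (mkposreal _ Hd). simpl. intros u v Hu Hv.
  pose proof (Rmin_l d1 d2). pose proof (Rmin_r d1 d2).
  destruct (MVT_abs (fun t => f t v) (fun t => pd1 f t v) a u) as [c [Hc Ec]].
  { intros s. exact (pd1_derivable _ _ _ (proj1 (Hex s v))). }
  destruct (MVT_abs (fun t => f a t) (fun t => pd2 f a t) b v) as [e [He Ee]].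
  { intros s. exact (pd2_derivable _ _ _ (proj2 (Hex a s))). }
  assert (Kc : Rabs (pd1 f c v - pd1 f a b) < eps / 2) by (apply K1; lra).
  assert (Ke : Rabs (pd2 f a e - pd2 f a b) < eps / 2).
  { apply K2; [rewrite Rminus_diag, Rabs_R0 |]; lra. }
  replace (f u v - f a b - (pd1 f a b * (u - a) + pd2 f a b * (v - b)))
    with ((pd1 f c v - pd1 f a b) * (u - a) + (pd2 f a e - pd2 f a b) * (v - b))
    by lra.
  eapply Rle_trans; [apply Rabs_triang |]. rewrite !Rabs_mult.
  pose proof (Rmax_l (Rabs (u - a)) (Rabs (v - b))).
  pose proof (Rmax_r (Rabs (u - a)) (Rabs (v - b))).
  pose proof (Rabs_pos (u - a)). pose proof (Rabs_pos (v - b)).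
  apply Rle_trans with (eps / 2 * Rmax (Rabs (u - a)) (Rabs (v - b)) +
                        eps / 2 * Rmax (Rabs (u - a)) (Rabs (v - b))); [| lra].
  apply Rplus_le_compat;
    (apply Rmult_le_compat; [apply Rabs_pos | apply Rabs_pos | lra | assumption]).
Qed.

Definition diff2 (f : R -> R -> R) a b da db := pd1 f a b * da + pd2 f a b * db.

Lemma derivable_pt_lim_isC1_comp f g1 g2 t d1 d2 u w : isC1 f ->
  derivable_pt_lim g1 t d1 -> derivable_pt_lim g2 t d2 -> g1 t = u -> g2 t = w ->
  derivable_pt_lim (fun s => f (g1 s) (g2 s)) t (diff2 f u w d1 d2).
Proof.
  intros Hf H1 H2 <- <-.
  apply derivable_pt_lim_comp_2d; auto. apply isC1_differentiable, Hf.
Qed.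

Lemma jcont_continuity_2d_pt f : jcont f -> forall a b, continuity_2d_pt f a b.
Proof.
  intros Hf a b eps. destruct (Hf a b eps (cond_pos eps)) as [d [Hd H]].
  exists (mkposreal d Hd). exact H.
Qed.

Lemma pd12_comm f : isC2 f -> forall a b, pd1 (pd2 f) a b = pd2 (pd1 f) a b.
Proof.
  intros [[E0 _] [[E1 [_ [_ C12]]] [E2 [_ [C21 _]]]]] a b.
  change (Derive (fun z => Derive (fun t => f z t) b) a =
          Derive (fun z => Derive (fun t => f t z) a) b).
  apply (Schwarz f a b).
  - exists (mkposreal 1 Rlt_0_1). intros u v _ _.
    exact (conj (proj1 (E0 u v)) (conj (proj2 (E0 u v))
            (conj (proj1 (E2 u v)) (proj2 (E1 u v))))).
  - exact (jcont_continuity_2d_pt _ C21 a b).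
  - exact (jcont_continuity_2d_pt _ C12 a b).
Qed.

Definition diag_periodic (f : R -> R -> R) := forall a b, f (a + 1) (b + 1) = f a b.

Lemma periodic_IZR {T} (g : R -> T) : (forall t, g (t + 1) = g t) ->
  forall m : Z, g (IZR m) = g 0.
Proof.
  intros Hg m. induction m as [| m IH | m IH] using Z.peano_ind.
  - reflexivity.
  - rewrite succ_IZR, Hg. exact IH.
  - rewrite <- Z.sub_1_r, minus_IZR, <- IH, <- (Hg (IZR m - 1)). f_equal. ring.
Qed.

Lemma diag_periodic_IZR f : diag_periodic f -> forall (m : Z) a b,
  f (a + IZR m) (b + IZR m) = f a b.
Proof.
  intros P m a b.
  rewrite (periodic_IZR (fun t => f (a + t) (b + t))), !Rplus_0_r; [reflexivity |].
  intros t. rewrite <- (P (a + t) (b + t)). f_equal; ring.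
Qed.

Lemma diag_periodic_pd1 f : diag_periodic f -> (forall a b, ex_derive (fun t => f t b) a) ->
  diag_periodic (pd1 f).
Proof.
  intros P E a b. apply is_derive_unique, is_derive_Reals.
  apply derivable_pt_lim_ext with (fun t => f (t - 1) b).
  { intros t. rewrite <- (P (t - 1) b). f_equal. ring. }
  replace (pd1 f a b) with (pd1 f a b * 1) by ring.
  apply (derivable_pt_lim_comp (fun t => t - 1) (fun t => f t b)).
  - apply is_derive_Reals. auto_derive; auto; ring.
  - replace (a + 1 - 1) with a by ring. apply pd1_derivable, E.
Qed.

Lemma diag_periodic_pd2 f : diag_periodic f -> (forall a b, ex_derive (fun t => f a t) b) ->
  diag_periodic (pd2 f).
Proof.
  intros P E a b. apply is_derive_unique, is_derive_Reals.
  apply derivable_pt_lim_ext with (fun t => f a (t - 1)).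
  { intros t. rewrite <- (P a (t - 1)). f_equal. ring. }
  replace (pd2 f a b) with (pd2 f a b * 1) by ring.
  apply (derivable_pt_lim_comp (fun t => t - 1) (fun t => f a t)).
  - apply is_derive_Reals. auto_derive; auto; ring.
  - replace (b + 1 - 1) with b by ring. apply pd2_derivable, E.
Qed.

Lemma isC2_diag_periodic_derivatives f : isC2 f -> diag_periodic f ->
  diag_periodic (pd1 f) /\ diag_periodic (pd2 f) /\ diag_periodic (pd1 (pd1 f)) /\
  diag_periodic (pd2 (pd1 f)) /\ diag_periodic (pd2 (pd2 f)).
Proof.
  intros Hf P.
  assert (P1 : diag_periodic (pd1 f))
    by (apply diag_periodic_pd1; [| apply isC1_ex_derive1, isC2_isC1]; assumption).
  assert (P2 : diag_periodic (pd2 f))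
    by (apply diag_periodic_pd2; [| apply isC1_ex_derive2, isC2_isC1]; assumption).
  repeat split; try assumption.
  - apply diag_periodic_pd1; [| apply isC1_ex_derive1, isC2_pd1]; assumption.
  - apply diag_periodic_pd2; [| apply isC1_ex_derive2, isC2_pd1]; assumption.
  - apply diag_periodic_pd2; [| apply isC1_ex_derive2, isC2_pd2]; assumption.
Qed.

Fixpoint sumZ (f : Z -> R) (M : Z) (L : nat) : R :=
  match L with O => 0 | S L' => sumZ f M L' + f (M + Z.of_nat L')%Z end.

Lemma action_sumZ W x M L : action W x M L = sumZ (fun n => W (x n) (x (n + 1)%Z)) M L.
Proof. induction L as [| L IH]; simpl; [reflexivity |]. rewrite IH. reflexivity. Qed.

Lemma sumZ_ext f g M L : (forall n, (M <= n < M + Z.of_nat L)%Z -> f n = g n) ->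
  sumZ f M L = sumZ g M L.
Proof.
  induction L as [| L IH]; intros E; simpl; [reflexivity |].
  rewrite IH, E; [reflexivity | lia | intros; apply E; lia].
Qed.

Lemma sumZ_le f g M L : (forall n, (M <= n < M + Z.of_nat L)%Z -> f n <= g n) ->
  sumZ f M L <= sumZ g M L.
Proof.
  induction L as [| L IH]; intros E; simpl; [lra |].
  apply Rplus_le_compat; [apply IH; intros; apply E | apply E]; lia.
Qed.

Lemma sumZ_zero f M L : (forall n, (M <= n < M + Z.of_nat L)%Z -> f n = 0) -> sumZ f M L = 0.
Proof.
  induction L as [| L IH]; intros E; simpl; [reflexivity |].
  rewrite IH, E; [ring | lia | intros; apply E; lia].
Qed.

Lemma sumZ_telescope (al be : Z -> R) M L :
  sumZ (fun n => al n + be (n + 1)%Z) M (S L) =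
  al M + sumZ (fun m => be m + al m) (M + 1) L + be (M + Z.of_nat (S L))%Z.
Proof.
  induction L as [| L IH].
  - simpl. rewrite Z.add_0_r. ring.
  - change (sumZ (fun n => al n + be (n + 1)%Z) M (S (S L))) with
      (sumZ (fun n => al n + be (n + 1)%Z) M (S L) +
       (al (M + Z.of_nat (S L))%Z + be (M + Z.of_nat (S L) + 1)%Z)).
    rewrite IH. simpl sumZ at 2.
    replace (M + 1 + Z.of_nat L)%Z with (M + Z.of_nat (S L))%Z by lia.
    replace (M + Z.of_nat (S L) + 1)%Z with (M + Z.of_nat (S (S L)))%Z by lia. ring.
Qed.

Lemma derivable_pt_lim_sumZ (F : Z -> R -> R) (F' : Z -> R) t M L :
  (forall n, derivable_pt_lim (F n) t (F' n)) ->
  derivable_pt_lim (fun s => sumZ (fun n => F n s) M L) t (sumZ F' M L).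
Proof.
  intros HF. induction L as [| L IH]; simpl.
  - apply derivable_pt_lim_const.
  - exact (derivable_pt_lim_plus _ _ t _ _ IH (HF _)).
Qed.

Definition quad_term (a b c v : Z -> R) (n : Z) : R :=
  a n * v n * v n + 2 * b n * v n * v (n + 1)%Z + c n * v (n + 1)%Z * v (n + 1)%Z.

Definition jacobi (a b c u : Z -> R) (m : Z) : R :=
  b (m - 1)%Z * u (m - 1)%Z + (c (m - 1)%Z + a m) * u m + b m * u (m + 1)%Z.

Definition quad_form_nonpos (a b c : Z -> R) : Prop :=
  forall M L v, v M = 0 -> v (M + Z.of_nat (S L))%Z = 0 ->
    sumZ (quad_term a b c v) M (S L) <= 0.

Lemma quad_form_by_parts a b c v M L : v M = 0 -> v (M + Z.of_nat (S L))%Z = 0 ->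
  sumZ (quad_term a b c v) M (S L) = sumZ (fun m => v m * jacobi a b c v m) (M + 1) L.
Proof.
  intros H0 H1.
  set (al := fun n => a n * v n * v n + b n * v n * v (n + 1)%Z).
  set (be := fun m => c (m - 1)%Z * v m * v m + b (m - 1)%Z * v (m - 1)%Z * v m).
  transitivity (sumZ (fun n => al n + be (n + 1)%Z) M (S L)).
  - apply sumZ_ext. intros n _. unfold quad_term, al, be.
    replace (n + 1 - 1)%Z with n by lia. ring.
  - rewrite sumZ_telescope. unfold al at 1. unfold be at 2. rewrite H0, H1.
    rewrite (sumZ_ext _ (fun m => v m * jacobi a b c v m)); [ring |].
    intros m _. unfold be, al, jacobi. ring.
Qed.

Lemma picone_ineq a b c p r v w : 0 < p -> 0 < r -> 0 < b ->
  a * v * v + 2 * b * v * w + c * w * w <=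
  (a * p + b * r) * (v * v) / p + (c * r + b * p) * (w * w) / r.
Proof.
  intros Hp Hr Hb.
  assert (E : (a * p + b * r) * (v * v) / p + (c * r + b * p) * (w * w) / r -
              (a * v * v + 2 * b * v * w + c * w * w) =
              b * ((r * v - p * w) * (r * v - p * w)) / (p * r)) by (field; lra).
  assert (0 <= b * ((r * v - p * w) * (r * v - p * w)) / (p * r)).
  { apply Rmult_le_pos; [apply Rmult_le_pos; [lra | apply Rle_0_sqr] |].
    left. apply Rinv_0_lt_compat. nra. }
  lra.
Qed.

(* Picone's identity, summed by parts. *)
Lemma quad_form_nonpos_of_supersolution a b c u v M L :
  (forall n, (M <= n <= M + Z.of_nat (S L))%Z -> 0 < u n) ->
  (forall n, (M <= n <= M + Z.of_nat L)%Z -> 0 < b n) ->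
  (forall m, (M < m < M + Z.of_nat (S L))%Z -> jacobi a b c u m <= 0) ->
  v M = 0 -> v (M + Z.of_nat (S L))%Z = 0 ->
  sumZ (quad_term a b c v) M (S L) <= 0.
Proof.
  intros Hu Hb HJ H0 H1.
  set (al := fun n => (a n * u n + b n * u (n + 1)%Z) * (v n * v n) / u n).
  set (be := fun m =>
    (c (m - 1)%Z * u m + b (m - 1)%Z * u (m - 1)%Z) * (v m * v m) / u m).
  apply Rle_trans with (sumZ (fun n => al n + be (n + 1)%Z) M (S L)).
  - apply sumZ_le. intros n Hn. unfold quad_term, al, be.
    replace (n + 1 - 1)%Z with n by lia.
    apply picone_ineq; [apply Hu | apply Hu | apply Hb]; lia.
  - rewrite sumZ_telescope. unfold al at 1. unfold be at 2. rewrite H0, H1.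
    enough (sumZ (fun m => be m + al m) (M + 1) L <= 0) by lra.
    rewrite <- (sumZ_zero (fun _ => 0) (M + 1) L) by reflexivity.
    apply sumZ_le. intros m Hm. unfold be, al.
    assert (Hum : 0 < u m) by (apply Hu; lia).
    assert (0 <= v m * v m / u m)
      by (apply Rmult_le_pos; [apply Rle_0_sqr | left; apply Rinv_0_lt_compat, Hum]).
    pose proof (HJ m ltac:(lia)) as J. unfold jacobi in J.
    replace (_ + _) with (v m * v m / u m * jacobi a b c u m) by (unfold jacobi; field; lra).
    unfold jacobi. nra.
Qed.

Fixpoint jacobi_rec (a b c r : Z -> R) (M : Z) (s0 s1 : R) (k : nat) : R * R :=
  match k with
  | O => (s0, s1)
  | S k' => let P := jacobi_rec a b c r M s0 s1 k' in
            let m := (M + Z.of_nat k' + 1)%Z in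
            (snd P, (r m - b (m - 1)%Z * fst P - (c (m - 1)%Z + a m) * snd P) / b m)
  end.

(* Values below [M] are junk: [Z.to_nat] truncates them to [s0]. *)
Definition jacobi_solution a b c r M s0 s1 (n : Z) : R :=
  fst (jacobi_rec a b c r M s0 s1 (Z.to_nat (n - M))).

Lemma jacobi_solution_at a b c r M s0 s1 k :
  jacobi_solution a b c r M s0 s1 (M + Z.of_nat k)%Z = fst (jacobi_rec a b c r M s0 s1 k).
Proof. unfold jacobi_solution. do 3 f_equal. lia. Qed.

Lemma jacobi_solution_next a b c r M s0 s1 k :
  jacobi_solution a b c r M s0 s1 (M + Z.of_nat k + 1)%Z = snd (jacobi_rec a b c r M s0 s1 k).
Proof.
  replace (M + Z.of_nat k + 1)%Z with (M + Z.of_nat (S k))%Z by lia.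
  apply jacobi_solution_at.
Qed.

Lemma jacobi_solution_init0 a b c r M s0 s1 : jacobi_solution a b c r M s0 s1 M = s0.
Proof. unfold jacobi_solution. rewrite Z.sub_diag. reflexivity. Qed.

Lemma jacobi_solution_init1 a b c r M s0 s1 :
  jacobi_solution a b c r M s0 s1 (M + 1)%Z = s1.
Proof.
  replace (M + 1)%Z with (M + Z.of_nat 0 + 1)%Z by lia.
  apply jacobi_solution_next.
Qed.

Lemma jacobi_solution_spec a b c r M s0 s1 : (forall m, b m <> 0) ->
  forall m, (M < m)%Z -> jacobi a b c (jacobi_solution a b c r M s0 s1) m = r m.
Proof.
  intros Hb m Hm.
  replace m with (M + Z.of_nat (Z.to_nat (m - M - 1)) + 1)%Z by lia.
  set (k := Z.to_nat (m - M - 1)). unfold jacobi.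
  replace (M + Z.of_nat k + 1 - 1)%Z with (M + Z.of_nat k)%Z by lia.
  replace (M + Z.of_nat k + 1 + 1)%Z with (M + Z.of_nat (S k) + 1)%Z by lia.
  rewrite jacobi_solution_at, !jacobi_solution_next. simpl jacobi_rec. cbv zeta. simpl snd.
  replace (M + Z.of_nat k + 1 - 1)%Z with (M + Z.of_nat k)%Z by lia.
  field. apply Hb.
Qed.

Lemma small_bump_pos al D eK : 0 < al -> eK <= 0 ->
  exists t, 0 < t /\ 0 < al * (t - eK) + t * (al + D * t).
Proof.
  intros Hal HeK. pose proof (Rabs_pos D) as HD.
  set (t := al / (Rabs D + 1)).
  assert (Ht : 0 < t) by (apply Rdiv_lt_0_compat; lra).
  assert (Htt : t * (Rabs D + 1) = al) by (unfold t; field; lra).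
  assert (HDt : - (Rabs D * t) <= D * t).
  { destruct (Rle_or_lt 0 D); [rewrite Rabs_right | rewrite Rabs_left]; nra. }
  assert (0 < al * t) by (apply Rmult_lt_0_compat; assumption).
  exists t. split; [exact Ht | nra].
Qed.

(* Sturm: were [e K <= 0], the test vector equal to [e] below [K], to a small
   [t > 0] at [K] and to 0 at [K + 1] would make the form positive. *)
Lemma jacobi_field_next_pos a b c e M K :
  (forall n, 0 < b n) -> quad_form_nonpos a b c -> e (M - 1)%Z = 0 -> (M < K)%Z ->
  (forall m, (M <= m < K)%Z -> 0 < e m /\ jacobi a b c e m = 0) ->
  0 < e K.
Proof.
  intros Hb QN He0 HMK He.
  destruct (Rlt_or_le 0 (e K)) as [Hpos | Hneg]; [exact Hpos | exfalso].
  set (E1 := e (K - 1)%Z). set (bb := b (K - 1)%Z).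
  assert (0 < bb * E1) by (apply Rmult_lt_0_compat; [apply Hb | apply He; lia]).
  destruct (small_bump_pos (bb * E1) (c (K - 1)%Z + a K) (e K)) as [t [Ht Hpos]];
    try assumption.
  set (v := fun n => if (n <? K)%Z then e n else if (n =? K)%Z then t else 0).
  assert (Ve : forall n, (n < K)%Z -> v n = e n).
  { intros n Hn. unfold v. destruct (Z.ltb_spec n K); [reflexivity | lia]. }
  assert (VK : v K = t) by (unfold v; rewrite Z.ltb_irrefl, Z.eqb_refl; reflexivity).
  assert (VK1 : v (K + 1)%Z = 0).
  { unfold v. destruct (Z.ltb_spec (K + 1) K); [lia |].
    destruct (Z.eqb_spec (K + 1) K); [lia | reflexivity]. }
  set (L := Z.to_nat (K - M - 1)).
  assert (EK : K = (M + Z.of_nat (S L))%Z) by lia.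
  assert (V0 : v (M - 1)%Z = 0) by (rewrite Ve by lia; exact He0).
  assert (V1 : v (M - 1 + Z.of_nat (S (S (S L))))%Z = 0).
  { replace (M - 1 + Z.of_nat (S (S (S L))))%Z with (K + 1)%Z by lia. exact VK1. }
  pose proof (QN (M - 1)%Z (S (S L)) v V0 V1) as Q.
  rewrite quad_form_by_parts in Q by assumption.
  replace (M - 1 + 1)%Z with M in Q by lia.
  change (sumZ (fun m => v m * jacobi a b c v m) M L +
          v (M + Z.of_nat L)%Z * jacobi a b c v (M + Z.of_nat L)%Z +
          v (M + Z.of_nat (S L))%Z * jacobi a b c v (M + Z.of_nat (S L))%Z <= 0) in Q.
  rewrite <- EK in Q. replace (M + Z.of_nat L)%Z with (K - 1)%Z in Q by lia.
  rewrite sumZ_zero in Q.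
  2:{ intros n Hn. replace (jacobi a b c v n) with (jacobi a b c e n).
      - rewrite (proj2 (He n ltac:(lia))). ring.
      - unfold jacobi. rewrite !Ve by lia. reflexivity. }
  assert (J1 : jacobi a b c v (K - 1)%Z = bb * (t - e K)).
  { pose proof (proj2 (He (K - 1)%Z ltac:(lia))) as J0. unfold jacobi in *.
    replace (K - 1 + 1)%Z with K in * by lia.
    rewrite !Ve, VK by lia. fold bb in J0 |- *. lra. }
  assert (J2 : jacobi a b c v K = bb * E1 + (c (K - 1)%Z + a K) * t).
  { unfold jacobi. rewrite VK, VK1, Ve by lia. fold bb E1. ring. }
  rewrite J1, J2, VK, Ve in Q by lia. fold E1 in Q.
  lra.
Qed.

Lemma jacobi_field_pos a b c e M :
  (forall n, 0 < b n) -> quad_form_nonpos a b c ->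
  e (M - 1)%Z = 0 -> e M = 1 -> (forall m, (M <= m)%Z -> jacobi a b c e m = 0) ->
  forall m, (M <= m)%Z -> 0 < e m.
Proof.
  intros Hb QN He0 He1 HJ.
  enough (Hk : forall k : nat, forall m, (M <= m <= M + Z.of_nat k)%Z -> 0 < e m).
  { intros m Hm. apply (Hk (Z.to_nat (m - M))). lia. }
  induction k as [| k IH]; intros m Hm.
  - replace m with M by lia. lra.
  - destruct (Z.le_gt_cases m (M + Z.of_nat k)) as [Hmk | Hmk]; [apply IH; lia |].
    apply (jacobi_field_next_pos a b c e M); try assumption; [lia |].
    intros n Hn. split; [apply IH | apply HJ]; lia.
Qed.

Definition hess11 W (q : Z -> R) n := pd1 (pd1 W) (q n) (q (n + 1)%Z).
Definition hess12 W (q : Z -> R) n := pd2 (pd1 W) (q n) (q (n + 1)%Z).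
Definition hess22 W (q : Z -> R) n := pd2 (pd2 W) (q n) (q (n + 1)%Z).

Notation jacobi_of W q := (jacobi (hess11 W q) (hess12 W q) (hess22 W q)).
Notation quad_term_of W q := (quad_term (hess11 W q) (hess12 W q) (hess22 W q)).

Definition line (q v : Z -> R) (t : R) : Z -> R := fun n => q n + t * v n.

Lemma line_0 q v : line q v 0 = q.
Proof. apply functional_extensionality. intros n. unfold line. ring. Qed.

Definition action_along W q v M L (t : R) : R :=
  sumZ (fun n => W (line q v t n) (line q v t (n + 1)%Z)) M L.

Definition first_var W q v (t : R) n : R :=
  diff2 W (line q v t n) (line q v t (n + 1)%Z) (v n) (v (n + 1)%Z).

Lemma action_along_0 W q v M L : action_along W q v M L 0 = action W q M L.
Proof. unfold action_along. rewrite line_0, action_sumZ. reflexivity. Qed.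

Lemma derivable_action_along W q v M L t : isC1 W ->
  derivable_pt_lim (action_along W q v M L) t (sumZ (first_var W q v t) M L).
Proof.
  intros HW. apply (derivable_pt_lim_sumZ (fun n s => W (line q v s n) (line q v s (n + 1)%Z))).
  intros n. apply derivable_pt_lim_isC1_comp; auto; apply derivable_pt_lim_affine.
Qed.

Lemma derivable_first_var W q v M L t : isC2 W ->
  derivable_pt_lim (fun s => sumZ (first_var W q v s) M L) t
    (sumZ (quad_term_of W (line q v t) v) M L).
Proof.
  intros HW. apply (derivable_pt_lim_sumZ (fun n s => first_var W q v s n)). intros n.
  unfold first_var, diff2. eapply derivable_pt_lim_eq.
  - apply derivable_pt_lim_plus; apply derivable_pt_lim_mult_r;
      apply derivable_pt_lim_isC1_comp; try apply derivable_pt_lim_affine; try reflexivity.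
    + apply isC2_pd1, HW.
    + apply isC2_pd2, HW.
  - unfold quad_term, hess11, hess12, hess22, diff2. rewrite (pd12_comm W HW). ring.
Qed.

Lemma first_var_config W q v M L : is_config W q ->
  v M = 0 -> v (M + Z.of_nat (S L))%Z = 0 -> sumZ (first_var W q v 0) M (S L) = 0.
Proof.
  intros Hc H0 H1. unfold first_var, diff2. rewrite line_0.
  set (al := fun n => pd1 W (q n) (q (n + 1)%Z) * v n).
  set (be := fun m => pd2 W (q (m - 1)%Z) (q m) * v m).
  transitivity (sumZ (fun n => al n + be (n + 1)%Z) M (S L)).
  - apply sumZ_ext. intros n _. unfold al, be.
    replace (n + 1 - 1)%Z with n by lia. reflexivity.
  - rewrite sumZ_telescope. unfold al at 1. unfold be at 2. rewrite H0, H1.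
    rewrite sumZ_zero; [ring |]. intros n _. unfold be, al.
    rewrite <- Rmult_plus_distr_r, Hc. ring.
Qed.

Lemma local_max_second_derivative_nonpos (g g1 : R -> R) Q tau : 0 < tau ->
  (forall s, derivable_pt_lim g s (g1 s)) -> g1 0 = 0 -> derivable_pt_lim g1 0 Q ->
  (forall t, Rabs t < tau -> g t <= g 0) -> Q <= 0.
Proof.
  intros Htau Dg Hg1 DQ Hmax.
  destruct (Rle_or_lt Q 0) as [| HQ]; [assumption | exfalso].
  destruct (DQ (Q / 2) ltac:(lra)) as [dl Hdl].
  assert (Hpos : forall h, 0 < h < dl -> 0 < g1 h).
  { intros h Hh. pose proof (Hdl h ltac:(lra) ltac:(rewrite Rabs_right; lra)) as K.
    rewrite Rplus_0_l, Hg1, Rminus_0_r in K. apply Rabs_def2 in K.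
    replace (g1 h) with (g1 h / h * h) by (field; lra).
    apply Rmult_lt_0_compat; lra. }
  set (t0 := Rmin dl tau / 2).
  pose proof (Rmin_l dl tau). pose proof (Rmin_r dl tau).
  assert (0 < Rmin dl tau) by (apply Rmin_pos; [apply cond_pos | lra]).
  destruct (MVT_cor2 g g1 0 t0 ltac:(unfold t0; lra) (fun c _ => Dg c)) as [c [Ec Hc]].
  pose proof (Hpos c ltac:(unfold t0 in *; lra)).
  pose proof (Hmax t0 ltac:(unfold t0; rewrite Rabs_right; lra)).
  assert (0 < g1 c * (t0 - 0)) by (apply Rmult_lt_0_compat; unfold t0 in *; lra).
  lra.
Qed.

Lemma le_of_second_derivative_nonpos (g g1 g2 : R -> R) :
  (forall s, derivable_pt_lim g s (g1 s)) -> (forall s, derivable_pt_lim g1 s (g2 s)) ->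
  g1 0 = 0 -> (forall s, 0 <= s <= 1 -> g2 s <= 0) -> g 1 <= g 0.
Proof.
  intros Dg Dg1 Hg1 Hg2.
  assert (Hneg : forall s, 0 < s <= 1 -> g1 s <= 0).
  { intros s Hs. destruct (MVT_cor2 g1 g2 0 s ltac:(lra) (fun c _ => Dg1 c)) as [c [Ec Hc]].
    pose proof (Hg2 c ltac:(lra)).
    assert (g2 c * (s - 0) <= 0) by (apply Rmult_le_0_r; lra). lra. }
  destruct (MVT_cor2 g g1 0 1 ltac:(lra) (fun c _ => Dg c)) as [c [Ec Hc]].
  pose proof (Hneg c ltac:(lra)). lra.
Qed.

Lemma uniform_radius (P : Z -> R -> Prop) M (L : nat) :
  (forall n e e', P n e -> 0 < e' <= e -> P n e') ->
  (forall n, (M <= n <= M + Z.of_nat L)%Z -> exists e, 0 < e /\ P n e) ->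
  exists e, 0 < e /\ forall n, (M <= n <= M + Z.of_nat L)%Z -> P n e.
Proof.
  intros Mono. induction L as [| L IH]; intros Hex.
  - destruct (Hex M ltac:(lia)) as [e [He Pe]]. exists e. split; [exact He |].
    intros n Hn. replace n with M by lia. exact Pe.
  - destruct IH as [e1 [He1 P1]]; [intros n Hn; apply Hex; lia |].
    destruct (Hex (M + Z.of_nat (S L))%Z ltac:(lia)) as [e2 [He2 P2]].
    pose proof (Rmin_l e1 e2). pose proof (Rmin_r e1 e2).
    assert (0 < Rmin e1 e2) by (apply Rmin_pos; assumption).
    exists (Rmin e1 e2). split; [assumption |]. intros n Hn.
    destruct (Z.le_gt_cases n (M + Z.of_nat L)).
    + apply Mono with e1; [apply P1; lia | lra].
    + replace n with (M + Z.of_nat (S L))%Z by lia. apply Mono with e2; [assumption | lra].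
Qed.

Lemma mconfig_line_local_max W q v M L : is_mconfig W q ->
  v M = 0 -> v (M + Z.of_nat (S L))%Z = 0 ->
  exists tau, 0 < tau /\ forall t, Rabs t < tau ->
    action_along W q v M (S L) t <= action_along W q v M (S L) 0.
Proof.
  intros [_ Hm] H0 H1.
  destruct (Hm M (M + Z.of_nat (S L))%Z ltac:(lia)) as [eps [Heps Hloc]].
  destruct (uniform_radius (fun n tau => forall t, Rabs t < tau -> Rabs (t * v n) < eps)
              M (S L)) as [tau [Htau Ptau]].
  { intros n e e' Pe He' t Ht. apply Pe. lra. }
  { intros n _. pose proof (Rabs_pos (v n)).
    exists (eps / (Rabs (v n) + 1)). split; [apply Rdiv_lt_0_compat; lra |].
    intros t Ht. rewrite Rabs_mult.
    apply Rmult_lt_compat_r with (r := Rabs (v n) + 1) in Ht; [| lra].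
    replace (eps / (Rabs (v n) + 1) * (Rabs (v n) + 1)) with eps in Ht by (field; lra).
    pose proof (Rabs_pos t). nra. }
  exists tau. split; [exact Htau |]. intros t Ht.
  rewrite action_along_0. unfold action_along. rewrite <- action_sumZ.
  replace (Z.to_nat (M + Z.of_nat (S L) - M)) with (S L) in Hloc by lia.
  apply Hloc.
  - unfold line. rewrite H0. ring.
  - unfold line. rewrite H1. ring.
  - intros n Hn. unfold line. replace (q n + t * v n - q n) with (t * v n) by ring.
    apply Ptau; [lia | exact Ht].
Qed.

Lemma mconfig_quad_form_nonpos W q : isC2 W -> is_mconfig W q ->
  quad_form_nonpos (hess11 W q) (hess12 W q) (hess22 W q).
Proof.
  intros HW Hq M L v H0 H1.
  destruct (mconfig_line_local_max W q v M L Hq H0 H1) as [tau [Htau Hmax]].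
  pose proof (derivable_first_var W q v M (S L) 0 HW) as D2. rewrite line_0 in D2.
  apply (local_max_second_derivative_nonpos (action_along W q v M (S L))
           (fun s => sumZ (first_var W q v s) M (S L)) _ tau Htau); try assumption.
  - intros s. apply derivable_action_along, isC2_isC1, HW.
  - apply first_var_config; [apply Hq | assumption | assumption].
Qed.

(* Adding a small multiple of the solution of [jacobi z = -1] makes the
   supersolution strict while keeping it positive. *)
Lemma strict_supersolution a b c u M N : (forall n, 0 < b n) -> (M < N)%Z ->
  (forall n, (M <= n <= N)%Z -> 0 < u n) ->
  (forall m, (M < m < N)%Z -> jacobi a b c u m = 0) ->
  exists w, (forall n, (M <= n <= N)%Z -> 0 < w n) /\
            (forall m, (M < m < N)%Z -> jacobi a b c w m < 0).
Proof.
  intros Hb HMN Hu HJ.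
  set (z := jacobi_solution a b c (fun _ => -1) M 0 0).
  assert (Hz : forall m, (M < m)%Z -> jacobi a b c z m = -1).
  { apply jacobi_solution_spec. intros n. apply Rgt_not_eq, Hb. }
  destruct (uniform_radius (fun n e => forall e', 0 < e' <= e -> 0 < u n + e' * z n)
              M (Z.to_nat (N - M))) as [ep [Hep Pep]].
  { intros n e e' Pe He' e'' He''. apply Pe. lra. }
  { intros n Hn. assert (Hun : 0 < u n) by (apply Hu; lia). pose proof (Rabs_pos (z n)).
    exists (u n / (Rabs (z n) + 1)). split; [apply Rdiv_lt_0_compat; lra |].
    intros e' [He'0 He'].
    apply Rmult_le_compat_r with (r := Rabs (z n) + 1) in He'; [| lra].
    replace (u n / (Rabs (z n) + 1) * (Rabs (z n) + 1)) with (u n) in He' by (field; lra).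
    assert (- (e' * Rabs (z n)) <= e' * z n).
    { destruct (Rle_or_lt 0 (z n)); [rewrite Rabs_right | rewrite Rabs_left]; nra. }
    nra. }
  exists (fun n => u n + ep * z n). split.
  - intros n Hn. apply Pep; [lia | lra].
  - intros m Hm.
    replace (jacobi a b c (fun n => u n + ep * z n) m)
      with (jacobi a b c u m + ep * jacobi a b c z m) by (unfold jacobi; ring).
    rewrite HJ, Hz by lia. lra.
Qed.

Lemma hessian_continuous W q n : isC2 W -> forall e, 0 < e -> exists d, 0 < d /\
  forall y : Z -> R, Rabs (y n - q n) < d -> Rabs (y (n + 1)%Z - q (n + 1)%Z) < d ->
  Rabs (hess11 W y n - hess11 W q n) < e /\ Rabs (hess12 W y n - hess12 W q n) < e /\
  Rabs (hess22 W y n - hess22 W q n) < e.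
Proof.
  intros HW e He.
  destruct (isC2_pd1 W HW) as [_ [_ [C11 C12]]].
  destruct (isC2_pd2 W HW) as [_ [_ [_ C22]]].
  destruct (C11 (q n) (q (n + 1)%Z) e He) as [d1 [Hd1 K1]].
  destruct (C12 (q n) (q (n + 1)%Z) e He) as [d2 [Hd2 K2]].
  destruct (C22 (q n) (q (n + 1)%Z) e He) as [d3 [Hd3 K3]].
  set (d := Rmin d1 (Rmin d2 d3)).
  pose proof (Rmin_l d1 (Rmin d2 d3) : d <= d1).
  pose proof (Rle_trans _ _ _ (Rmin_r _ _) (Rmin_l d2 d3) : d <= d2).
  pose proof (Rle_trans _ _ _ (Rmin_r _ _) (Rmin_r d2 d3) : d <= d3).
  exists d. split; [repeat apply Rmin_pos; assumption |]. intros y Y0 Y1.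
  unfold hess11, hess12, hess22.
  split; [| split]; [apply K1 | apply K2 | apply K3]; lra.
Qed.

Lemma jacobi_continuous W q u m : isC2 W -> forall e, 0 < e -> exists d, 0 < d /\
  forall y : Z -> R, (forall n, (m - 1 <= n <= m + 1)%Z -> Rabs (y n - q n) < d) ->
  Rabs (jacobi_of W y u m - jacobi_of W q u m) < e.
Proof.
  intros HW e He.
  set (U := Rabs (u (m - 1)%Z) + Rabs (u m) + Rabs (u (m + 1)%Z) + 1).
  pose proof (Rabs_pos (u (m - 1)%Z)). pose proof (Rabs_pos (u m)).
  pose proof (Rabs_pos (u (m + 1)%Z)).
  set (e' := e / (4 * U)).
  assert (He' : 0 < e') by (apply Rdiv_lt_0_compat; unfold U; lra).
  destruct (hessian_continuous W q (m - 1) HW e' He') as [d1 [Hd1 K1]].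
  destruct (hessian_continuous W q m HW e' He') as [d2 [Hd2 K2]].
  pose proof (Rmin_l d1 d2). pose proof (Rmin_r d1 d2).
  exists (Rmin d1 d2). split; [apply Rmin_pos; assumption |]. intros y Hy.
  replace (m - 1 + 1)%Z with m in K1 by lia.
  assert (Hy' : forall n, (m - 1 <= n <= m + 1)%Z -> Rabs (y n - q n) < d1 /\ Rabs (y n - q n) < d2)
    by (intros n Hn; pose proof (Hy n Hn); split; lra).
  destruct (K1 y) as (_ & A1 & A2); [apply Hy'; lia .. |].
  destruct (K2 y) as (A3 & A4 & _); [apply Hy'; lia .. |].
  unfold jacobi.
  match goal with |- Rabs ?X < _ =>
    replace X with ((hess12 W y (m - 1) - hess12 W q (m - 1)) * u (m - 1)%Z +
                    (hess22 W y (m - 1) - hess22 W q (m - 1)) * u m +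
                    (hess11 W y m - hess11 W q m) * u m +
                    (hess12 W y m - hess12 W q m) * u (m + 1)%Z) by ring end.
  assert (Bound : forall D w, Rabs D < e' -> Rabs (D * w) <= e' * Rabs w).
  { intros D w HD. rewrite Rabs_mult. apply Rmult_le_compat_r; [apply Rabs_pos | lra]. }
  pose proof (Bound _ (u (m - 1)%Z) A1). pose proof (Bound _ (u m) A2).
  pose proof (Bound _ (u m) A3). pose proof (Bound _ (u (m + 1)%Z) A4).
  match goal with |- Rabs (?a + ?b + ?c + ?d) < _ =>
    pose proof (Rabs_triang (a + b + c) d); pose proof (Rabs_triang (a + b) c);
    pose proof (Rabs_triang a b) end.
  assert (E4 : e' * (4 * U) = e) by (unfold e'; field; unfold U; lra).
  unfold U in E4. nra.
Qed.

Lemma perturbed_supersolution W q u M N : isC2 W -> (M < N)%Z ->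
  (forall m, (M < m < N)%Z -> jacobi_of W q u m < 0) ->
  exists d, 0 < d /\ forall y : Z -> R,
    (forall n, (M <= n <= N)%Z -> Rabs (y n - q n) < d) ->
    forall m, (M < m < N)%Z -> jacobi_of W y u m <= 0.
Proof.
  intros HW HMN Hu.
  destruct (uniform_radius (fun m d => (M < m < N)%Z -> forall y : Z -> R,
              (forall n, (m - 1 <= n <= m + 1)%Z -> Rabs (y n - q n) < d) ->
              jacobi_of W y u m <= 0) M (Z.to_nat (N - M))) as [d [Hd Pd]].
  { intros m d d' Pd Hd' Hm y Hy. apply Pd; [exact Hm |].
    intros n Hn. specialize (Hy n Hn). lra. }
  { intros m _. destruct (Z.lt_ge_cases M m) as [HMm |]; [destruct (Z.lt_ge_cases m N) |].
    - pose proof (Hu m ltac:(lia)).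
      destruct (jacobi_continuous W q u m HW (- jacobi_of W q u m)) as [d [Hd K]]; [lra |].
      exists d. split; [exact Hd |]. intros _ y Hy.
      pose proof (Rabs_def2 _ _ (K y Hy)). lra.
    - exists 1. split; [lra | lia].
    - exists 1. split; [lra | lia]. }
  exists d. split; [exact Hd |]. intros y Hy m Hm.
  apply (Pd m); [lia | exact Hm |]. intros n Hn. apply Hy. lia.
Qed.

Definition twist (W : R -> R -> R) := forall a b, pd2 (pd1 W) a b > 0.

(* The action along the segment from [q] to [x] is concave: its second
   derivative is a quadratic form dominated, via Picone, by a positive
   supersolution that persists near [q]. *)
Lemma mconfig_of_positive_jacobi_fields W q : isC2 W -> twist W -> is_config W q ->
  (forall M N, (M < N)%Z -> exists u, (forall n, (M <= n <= N)%Z -> 0 < u n) /\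
     (forall m, (M < m < N)%Z -> jacobi_of W q u m = 0)) ->
  is_mconfig W q.
Proof.
  intros HW Htw Hc Hu. split; [exact Hc |]. intros M N HMN.
  assert (Hb : forall (y : Z -> R) n, 0 < hess12 W y n) by (intros y n; apply Htw).
  destruct (Hu M N HMN) as [u [Up UJ]].
  destruct (strict_supersolution _ _ _ u M N (Hb q) HMN Up UJ) as [w [Wp WJ]].
  destruct (perturbed_supersolution W q w M N HW HMN WJ) as [d [Hd Pd]].
  exists d. split; [exact Hd |]. intros x XM XN Xc.
  set (L := Z.to_nat (N - M - 1)).
  assert (EN : N = (M + Z.of_nat (S L))%Z) by lia.
  set (v := fun n => x n - q n).
  assert (V0 : v M = 0) by (unfold v; rewrite XM; ring).
  assert (V1 : v (M + Z.of_nat (S L))%Z = 0) by (unfold v; rewrite <- EN, XN; ring).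
  replace (Z.to_nat (N - M)) with (S L) by lia.
  assert (E1 : action W x M (S L) = action_along W q v M (S L) 1).
  { unfold action_along. rewrite action_sumZ.
    apply sumZ_ext. intros n _. unfold line, v. f_equal; ring. }
  rewrite E1, <- (action_along_0 W q v).
  apply (le_of_second_derivative_nonpos _ (fun s => sumZ (first_var W q v s) M (S L))
           (fun s => sumZ (quad_term_of W (line q v s) v) M (S L))).
  - intros s. apply derivable_action_along, isC2_isC1, HW.
  - intros s. apply derivable_first_var, HW.
  - apply first_var_config; assumption.
  - intros s Hs. apply (quad_form_nonpos_of_supersolution _ _ _ w); try assumption.
    + intros n Hn. apply Wp. lia.
    + intros n _. apply Hb.
    + intros m Hm. apply Pd; [| lia]. intros n Hn. unfold line.
      replace (q n + s * v n - q n) with (s * v n) by ring.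
      rewrite Rabs_mult, (Rabs_right s) by lra.
      assert (Rabs (v n) < d).
      { destruct (Z.eq_dec n M) as [-> | ]; [rewrite V0, Rabs_R0; lra |].
        destruct (Z.eq_dec n N) as [-> | ]; [rewrite EN, V1, Rabs_R0; lra |].
        apply Xc. lia. }
      pose proof (Rabs_pos (v n)). nra.
Qed.

Lemma mconfig_jacobi_field W q K : isC2 W -> twist W -> is_mconfig W q ->
  exists e, forall m, (K <= m)%Z -> jacobi_of W q e m = 0 /\ 0 < e m.
Proof.
  intros HW Htw Hq.
  set (e := jacobi_solution (hess11 W q) (hess12 W q) (hess22 W q) (fun _ => 0) (K - 1) 0 1).
  assert (HJ : forall m, (K <= m)%Z -> jacobi_of W q e m = 0).
  { intros m Hm. refine (jacobi_solution_spec _ _ _ (fun _ => 0) _ _ _ _ m _); [| lia].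
    intros n. apply Rgt_not_eq, Htw. }
  exists e. intros m Hm. split; [apply HJ, Hm |].
  apply (jacobi_field_pos (hess11 W q) (hess12 W q) (hess22 W q) e K); try assumption.
  - intros n. apply Htw.
  - apply mconfig_quad_form_nonpos; assumption.
  - apply jacobi_solution_init0.
  - pose proof (jacobi_solution_init1 (hess11 W q) (hess12 W q) (hess22 W q)
                  (fun _ => 0) (K - 1) 0 1) as I1.
    replace (K - 1 + 1)%Z with K in I1 by lia. exact I1.
Qed.

Section InversePair.

Variables Phi Psi : R * R -> R * R.
Hypothesis HPhiPsi : forall w, Phi (Psi w) = w.
Hypotheses (HPhi1 : isC1 (cp1 Phi)) (HPhi2 : isC1 (cp2 Phi))
           (HPsi1 : isC1 (cp1 Psi)) (HPsi2 : isC1 (cp2 Psi)).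

Lemma Phi_Psi_cp a b : Phi (cp1 Psi a b, cp2 Psi a b) = (a, b).
Proof. unfold cp1, cp2. rewrite <- surjective_pairing. apply HPhiPsi. Qed.

Lemma jacobian_inverse_col1 a b :
  diff2 (cp1 Phi) (cp1 Psi a b) (cp2 Psi a b) (pd1 (cp1 Psi) a b) (pd1 (cp2 Psi) a b) = 1 /\
  diff2 (cp2 Phi) (cp1 Psi a b) (cp2 Psi a b) (pd1 (cp1 Psi) a b) (pd1 (cp2 Psi) a b) = 0.
Proof.
  assert (D1 := pd1_derivable _ _ _ (isC1_ex_derive1 _ HPsi1 a b)).
  assert (D2 := pd1_derivable _ _ _ (isC1_ex_derive1 _ HPsi2 a b)).
  split.
  - apply (derivable_pt_lim_ext_unique
             (fun t => cp1 Phi (cp1 Psi t b) (cp2 Psi t b)) (fun t => t) a).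
    + intros t. unfold cp1 at 1. rewrite Phi_Psi_cp. reflexivity.
    + apply derivable_pt_lim_isC1_comp; auto.
    + apply derivable_pt_lim_id.
  - apply (derivable_pt_lim_ext_unique
             (fun t => cp2 Phi (cp1 Psi t b) (cp2 Psi t b)) (fun _ => b) a).
    + intros t. unfold cp2 at 1. rewrite Phi_Psi_cp. reflexivity.
    + apply derivable_pt_lim_isC1_comp; auto.
    + apply derivable_pt_lim_const.
Qed.

Lemma jacobian_inverse_col2 a b :
  diff2 (cp1 Phi) (cp1 Psi a b) (cp2 Psi a b) (pd2 (cp1 Psi) a b) (pd2 (cp2 Psi) a b) = 0 /\
  diff2 (cp2 Phi) (cp1 Psi a b) (cp2 Psi a b) (pd2 (cp1 Psi) a b) (pd2 (cp2 Psi) a b) = 1.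
Proof.
  assert (D1 := pd2_derivable _ _ _ (isC1_ex_derive2 _ HPsi1 a b)).
  assert (D2 := pd2_derivable _ _ _ (isC1_ex_derive2 _ HPsi2 a b)).
  split.
  - apply (derivable_pt_lim_ext_unique
             (fun t => cp1 Phi (cp1 Psi a t) (cp2 Psi a t)) (fun _ => a) b).
    + intros t. unfold cp1 at 1. rewrite Phi_Psi_cp. reflexivity.
    + apply derivable_pt_lim_isC1_comp; auto.
    + apply derivable_pt_lim_const.
  - apply (derivable_pt_lim_ext_unique
             (fun t => cp2 Phi (cp1 Psi a t) (cp2 Psi a t)) (fun t => t) b).
    + intros t. unfold cp2 at 1. rewrite Phi_Psi_cp. reflexivity.
    + apply derivable_pt_lim_isC1_comp; auto.
    + apply derivable_pt_lim_id.
Qed.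

Definition area_preserving (f : R * R -> R * R) := forall a b,
  pd1 (cp1 f) a b * pd2 (cp2 f) a b - pd2 (cp1 f) a b * pd1 (cp2 f) a b = 1.

Hypothesis HPhi_area : area_preserving Phi.

Lemma inverse_area_preserving : area_preserving Psi.
Proof.
  intros a b.
  destruct (jacobian_inverse_col1 a b) as [A1 A2].
  destruct (jacobian_inverse_col2 a b) as [B1 B2].
  pose proof (HPhi_area (cp1 Psi a b) (cp2 Psi a b)) as S.
  unfold diff2 in *.
  (* [det (DPhi DPsi) = det DPhi * det DPsi] *)
  match type of S with ?A * ?D - ?B * ?C = 1 =>
    assert (I : (A * D - B * C) *
                (pd1 (cp1 Psi) a b * pd2 (cp2 Psi) a b - pd2 (cp1 Psi) a b * pd1 (cp2 Psi) a b) =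
              (A * pd1 (cp1 Psi) a b + B * pd1 (cp2 Psi) a b) *
              (C * pd2 (cp1 Psi) a b + D * pd2 (cp2 Psi) a b) -
              (A * pd2 (cp1 Psi) a b + B * pd2 (cp2 Psi) a b) *
              (C * pd1 (cp1 Psi) a b + D * pd1 (cp2 Psi) a b)) by ring end.
  rewrite S, A1, A2, B1, B2 in I. lra.
Qed.

Lemma pd2_inverse_area_preserving a b :
  pd2 (cp1 Psi) a b = - pd2 (cp1 Phi) (cp1 Psi a b) (cp2 Psi a b) /\
  pd2 (cp2 Psi) a b = pd1 (cp1 Phi) (cp1 Psi a b) (cp2 Psi a b).
Proof.
  destruct (jacobian_inverse_col2 a b) as [C1 C2]. unfold diff2 in C1, C2.
  pose proof (HPhi_area (cp1 Psi a b) (cp2 Psi a b)) as S.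
  set (A := pd1 (cp1 Phi) _ _) in *. set (B := pd2 (cp1 Phi) _ _) in *.
  set (C := pd1 (cp2 Phi) _ _) in *. set (D := pd2 (cp2 Phi) _ _) in *.
  set (d1 := pd2 (cp1 Psi) a b) in *. set (d2 := pd2 (cp2 Psi) a b) in *.
  assert (E1 : A * (C * d1 + D * d2) - d2 * (A * D - B * C) = C * (A * d1 + B * d2)) by ring.
  assert (E2 : B * (C * d1 + D * d2) + d1 * (A * D - B * C) = D * (A * d1 + B * d2)) by ring.
  rewrite C1, C2, S in E1, E2. split; lra.
Qed.

End InversePair.

(* [Phi] maps every H-orbit segment to a G-orbit segment, up to the deck
   translation by [s] of its endpoint. *)
Definition gen_transport (H G : R -> R -> R) (Phi : R * R -> R * R) (s : Z) :=
  forall a b,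
    cp2 Phi a (- pd1 H a b) =
      - pd1 G (cp1 Phi a (- pd1 H a b)) (cp1 Phi b (pd2 H a b) + IZR s) /\
    cp2 Phi b (pd2 H a b) =
      pd2 G (cp1 Phi a (- pd1 H a b)) (cp1 Phi b (pd2 H a b) + IZR s).

Definition cone_condition (H : R -> R -> R) (Phi Psi : R * R -> R * R) :=
  forall q, is_mconfig H q -> forall n,
    let w := Phi (q n, - pd1 H (q n) (q (n + 1)%Z)) in
    in_N H (q (n - 1)%Z) (q n) (q (n + 1)%Z)
      (pd2 (cp1 Psi) (fst w) (snd w), pd2 (cp2 Psi) (fst w) (snd w)).

(* Written with [d1, d2] the components of the vertical vector [d/dy] and [e]
   a positive Jacobi field: the first branch of the cone handles [d1 >= 0],
   the second one, after eliminating [e1] by the Jacobi equation, [d1 < 0]. *)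
Lemma cone_combination_pos h11 h12 h12' h22' d1 d2 em e0 e1 :
  0 < h12 -> 0 < h12' -> 0 < em -> 0 < e0 -> 0 < e1 ->
  h12' * em + (h22' + h11) * e0 + h12 * e1 = 0 ->
  d2 > Rmax (- h11 * d1) (h22' * d1) ->
  0 < d2 * e0 + d1 * (h11 * e0 + h12 * e1).
Proof.
  intros T1 T2 Hm H0 H1 J C.
  pose proof (Rmax_l (- h11 * d1) (h22' * d1)). pose proof (Rmax_r (- h11 * d1) (h22' * d1)).
  destruct (Rle_or_lt 0 d1) as [Hd | Hd].
  - assert (0 <= h12 * d1 * e1) by (apply Rmult_le_pos; [apply Rmult_le_pos |]; lra).
    assert (0 < (d2 + h11 * d1) * e0) by (apply Rmult_lt_0_compat; lra).
    nra.
  - assert (0 < h12' * (- d1) * em) by (apply Rmult_lt_0_compat; [apply Rmult_lt_0_compat |]; lra).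
    assert (0 < (d2 - h22' * d1) * e0) by (apply Rmult_lt_0_compat; lra).
    nra.
Qed.

Section Transport.

Variables H G : R -> R -> R.
Variable Phi : R * R -> R * R.
Variable s : Z.
Hypotheses (HPhi1 : isC1 (cp1 Phi)) (HPhi2 : isC1 (cp2 Phi)) (HC2 : isC2 H) (GC2 : isC2 G).
Hypothesis Link : gen_transport H G Phi s.

Lemma gen_transport_linearized a b da db :
  let p := - pd1 H a b in let p' := pd2 H a b in
  let dp := - diff2 (pd1 H) a b da db in let dp' := diff2 (pd2 H) a b da db in
  let x := cp1 Phi a p in let x' := cp1 Phi b p' + IZR s in
  let dx := diff2 (cp1 Phi) a p da dp in let dx' := diff2 (cp1 Phi) b p' db dp' in
  diff2 (cp2 Phi) a p da dp = - diff2 (pd1 G) x x' dx dx' /\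
  diff2 (cp2 Phi) b p' db dp' = diff2 (pd2 G) x x' dx dx'.
Proof.
  intros p p' dp dp' x x' dx dx'.
  set (A := fun t => a + t * da). set (B := fun t => b + t * db).
  assert (DA : derivable_pt_lim A 0 da) by apply derivable_pt_lim_affine.
  assert (DB : derivable_pt_lim B 0 db) by apply derivable_pt_lim_affine.
  assert (A0 : A 0 = a) by (unfold A; ring).
  assert (B0 : B 0 = b) by (unfold B; ring).
  set (P := fun t => - pd1 H (A t) (B t)). set (P' := fun t => pd2 H (A t) (B t)).
  assert (P0 : P 0 = p) by (unfold P, p; rewrite A0, B0; reflexivity).
  assert (P'0 : P' 0 = p') by (unfold P', p'; rewrite A0, B0; reflexivity).
  assert (DP : derivable_pt_lim P 0 dp).
  { apply derivable_pt_lim_opp, derivable_pt_lim_isC1_comp; auto. apply isC2_pd1, HC2. }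
  assert (DP' : derivable_pt_lim P' 0 dp').
  { apply derivable_pt_lim_isC1_comp; auto. apply isC2_pd2, HC2. }
  set (Xt := fun t => cp1 Phi (A t) (P t)).
  set (Xt' := fun t => cp1 Phi (B t) (P' t) + IZR s).
  assert (X0 : Xt 0 = x) by (unfold Xt, x; rewrite A0, P0; reflexivity).
  assert (X'0 : Xt' 0 = x') by (unfold Xt', x'; rewrite B0, P'0; reflexivity).
  assert (DX : derivable_pt_lim Xt 0 dx) by (apply derivable_pt_lim_isC1_comp; auto).
  assert (DX' : derivable_pt_lim Xt' 0 dx').
  { replace dx' with (dx' + 0) by ring.
    apply derivable_pt_lim_plus; [| apply derivable_pt_lim_const].
    apply derivable_pt_lim_isC1_comp; auto. }
  split.
  - apply (derivable_pt_lim_ext_unique (fun t => cp2 Phi (A t) (P t))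
             (fun t => - pd1 G (Xt t) (Xt' t)) 0).
    + intros t. apply Link.
    + apply derivable_pt_lim_isC1_comp; auto.
    + apply derivable_pt_lim_opp, derivable_pt_lim_isC1_comp; auto. apply isC2_pd1, GC2.
  - apply (derivable_pt_lim_ext_unique (fun t => cp2 Phi (B t) (P' t))
             (fun t => pd2 G (Xt t) (Xt' t)) 0).
    + intros t. apply Link.
    + apply derivable_pt_lim_isC1_comp; auto.
    + apply derivable_pt_lim_isC1_comp; auto. apply isC2_pd2, GC2.
Qed.

Definition mom (q : Z -> R) m := - pd1 H (q m) (q (m + 1)%Z).
Definition base_point q m := cp1 Phi (q m) (mom q m).
Definition transported q m := base_point q m + IZR (m * s).
Definition dmom q (e : Z -> R) m := - diff2 (pd1 H) (q m) (q (m + 1)%Z) (e m) (e (m + 1)%Z).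
Definition transported_field q e m := diff2 (cp1 Phi) (q m) (mom q m) (e m) (dmom q e m).

Lemma config_pd2 q : is_config H q -> forall m, pd2 H (q m) (q (m + 1)%Z) = mom q (m + 1)%Z.
Proof.
  intros Hc m. pose proof (Hc (m + 1)%Z) as K.
  replace (m + 1 - 1)%Z with m in K by lia. unfold mom. lra.
Qed.

Lemma transport_links q : is_config H q -> forall m,
  cp2 Phi (q m) (mom q m) =
    - pd1 G (base_point q m) (base_point q (m + 1) + IZR s) /\
  cp2 Phi (q (m + 1)%Z) (mom q (m + 1)) =
    pd2 G (base_point q m) (base_point q (m + 1) + IZR s).
Proof. intros Hc m. unfold base_point. rewrite <- (config_pd2 q Hc m). apply Link. Qed.

Hypothesis G_per : diag_periodic G.

Lemma transported_shift q f : diag_periodic f -> forall m,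
  f (transported q m) (transported q (m + 1)) =
  f (base_point q m) (base_point q (m + 1) + IZR s).
Proof.
  intros Pf m. unfold transported.
  rewrite <- (diag_periodic_IZR f Pf (m * s) (base_point q m)). f_equal.
  rewrite !mult_IZR, plus_IZR. ring.
Qed.

Lemma transported_config q : is_config H q -> is_config G (transported q).
Proof.
  intros Hc m. destruct (isC2_diag_periodic_derivatives G GC2 G_per) as (P1 & P2 & _).
  pose proof (transported_shift q _ P2 (m - 1)) as S2.
  replace (m - 1 + 1)%Z with m in S2 by lia.
  rewrite S2, (transported_shift q _ P1 m).
  destruct (transport_links q Hc (m - 1)) as [_ L2]. destruct (transport_links q Hc m) as [L1 _].
  replace (m - 1 + 1)%Z with m in L2 by lia. lra.
Qed.

(* The linearised transport identities at steps [m - 1] and [m] are the two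
   halves of the G-Jacobi equation at [m]. *)
Lemma transported_jacobi_field q e K : is_config H q ->
  (forall m, (K <= m)%Z -> jacobi_of H q e m = 0) ->
  forall m, (K <= m)%Z -> jacobi_of G (transported q) (transported_field q e) m = 0.
Proof.
  intros Hc He.
  assert (Hdm : forall m, (K <= m + 1)%Z ->
            diff2 (pd2 H) (q m) (q (m + 1)%Z) (e m) (e (m + 1)%Z) = dmom q e (m + 1)).
  { intros m Hm. pose proof (He (m + 1)%Z Hm) as J.
    unfold jacobi, hess11, hess12, hess22 in J. replace (m + 1 - 1)%Z with m in J by lia.
    unfold dmom, diff2. rewrite (pd12_comm H HC2). lra. }
  assert (Lin : forall m, (K <= m + 1)%Z ->
    let x := base_point q m in let x' := base_point q (m + 1) + IZR s in
    diff2 (cp2 Phi) (q m) (mom q m) (e m) (dmom q e m) =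
      - diff2 (pd1 G) x x' (transported_field q e m) (transported_field q e (m + 1)) /\
    diff2 (cp2 Phi) (q (m + 1)%Z) (mom q (m + 1)) (e (m + 1)%Z) (dmom q e (m + 1)) =
      diff2 (pd2 G) x x' (transported_field q e m) (transported_field q e (m + 1))).
  { intros m Hm. pose proof (gen_transport_linearized (q m) (q (m + 1)%Z) (e m) (e (m + 1)%Z))
      as Lin.
    cbv zeta in Lin. rewrite Hdm, config_pd2 in Lin by assumption. exact Lin. }
  destruct (isC2_diag_periodic_derivatives G GC2 G_per) as (_ & _ & P11 & P12 & P22).
  intros m Hm. destruct (Lin (m - 1)%Z ltac:(lia)) as [_ I2]. destruct (Lin m ltac:(lia)) as [I1 _].
  cbv zeta in I1, I2. replace (m - 1 + 1)%Z with m in I2 by lia.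
  unfold jacobi, hess11, hess12, hess22. replace (m - 1 + 1)%Z with m by lia.
  pose proof (transported_shift q _ P12 (m - 1)) as S1.
  pose proof (transported_shift q _ P22 (m - 1)) as S2.
  replace (m - 1 + 1)%Z with m in S1, S2 by lia.
  rewrite S1, S2, (transported_shift q _ P11 m), (transported_shift q _ P12 m).
  unfold diff2 in I1, I2. rewrite (pd12_comm G GC2) in I2. lra.
Qed.

Variable Psi : R * R -> R * R.
Hypotheses (HPsiPhi : forall z, Psi (Phi z) = z) (HPhiPsi : forall w, Phi (Psi w) = w).
Hypotheses (HPsi1 : isC1 (cp1 Psi)) (HPsi2 : isC1 (cp2 Psi)).
Hypothesis HPhi_area : area_preserving Phi.
Hypotheses (H_twist : twist H) (G_twist : twist G).
Hypothesis Hcone : cone_condition H Phi Psi.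

Lemma transported_field_pos q e K : is_mconfig H q ->
  (forall m, (K <= m)%Z -> jacobi_of H q e m = 0 /\ 0 < e m) ->
  forall m, (K < m)%Z -> 0 < transported_field q e m.
Proof.
  intros Hq He m Hm.
  set (w := Phi (q m, mom q m)).
  assert (Ew : (cp1 Psi (fst w) (snd w), cp2 Psi (fst w) (snd w)) = (q m, mom q m)).
  { unfold cp1, cp2. rewrite <- !surjective_pairing. apply HPsiPhi. }
  injection Ew as E1 E2.
  destruct (pd2_inverse_area_preserving Phi Psi HPhiPsi HPhi1 HPhi2 HPsi1 HPsi2 HPhi_area
              (fst w) (snd w)) as [D1 D2].
  rewrite E1, E2 in D1, D2.
  pose proof (Hcone q Hq m) as C. unfold in_N in C. simpl in C. fold (mom q m) w in C.
  destruct (He (m - 1)%Z ltac:(lia)) as [_ Em]. destruct (He m ltac:(lia)) as [J E0].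
  destruct (He (m + 1)%Z ltac:(lia)) as [_ E1'].
  unfold jacobi, hess11, hess12, hess22 in J. replace (m - 1 + 1)%Z with m in J by lia.
  replace (transported_field q e m) with
    (pd2 (cp2 Psi) (fst w) (snd w) * e m + pd2 (cp1 Psi) (fst w) (snd w) *
      (pd1 (pd1 H) (q m) (q (m + 1)%Z) * e m + pd2 (pd1 H) (q m) (q (m + 1)%Z) * e (m + 1)%Z))
    by (unfold transported_field, dmom, diff2; rewrite D1, D2; ring).
  apply (cone_combination_pos _ _ (pd2 (pd1 H) (q (m - 1)%Z) (q m))
           (pd2 (pd2 H) (q (m - 1)%Z) (q m)) _ _ (e (m - 1)%Z)); try assumption; apply H_twist.
Qed.

Lemma transported_mconfig q : is_mconfig H q -> is_mconfig G (transported q).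
Proof.
  intros Hq. apply mconfig_of_positive_jacobi_fields; try assumption.
  { apply transported_config, Hq. }
  intros M N HMN.
  destruct (mconfig_jacobi_field H q (M - 1) HC2 H_twist Hq) as [e He].
  exists (transported_field q e). split.
  - intros n Hn. apply (transported_field_pos q e (M - 1)); [assumption | assumption | lia].
  - intros m Hm. apply (transported_jacobi_field q e (M - 1)); [apply Hq | | lia].
    intros k Hk. apply He, Hk.
Qed.

Lemma swept_transport q n : is_mconfig H q -> swept G (Phi (q n, mom q n)).
Proof.
  intros Hq. exists (transported q). split; [apply transported_mconfig, Hq |].
  (* [transported q] drifts by [s] per step; undo the drift at index [n]. *)
  exists n, (- (n * s))%Z.
  rewrite (surjective_pairing (Phi _)). f_equal.
  - change (fst (Phi (q n, mom q n))) with (base_point q n).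
    unfold transported. rewrite opp_IZR. ring.
  - change (snd (Phi (q n, mom q n))) with (cp2 Phi (q n) (mom q n)).
    rewrite (proj1 (transport_links q (proj1 Hq) n)).
    unfold transported. rewrite opp_IZR, !mult_IZR, plus_IZR.
    f_equal. f_equal; ring.
Qed.

End Transport.

Lemma action_shift W j x M L : diag_periodic W ->
  action W (fun m => x m + IZR j) M L = action W x M L.
Proof.
  intros P. rewrite !action_sumZ. apply sumZ_ext. intros n _. apply diag_periodic_IZR, P.
Qed.

Lemma mconfig_shift W q j : isC2 W -> diag_periodic W -> is_mconfig W q ->
  is_mconfig W (fun m => q m + IZR j).
Proof.
  intros HW P [Hc Hm]. destruct (isC2_diag_periodic_derivatives W HW P) as (P1 & P2 & _).
  split.
  - intros m. rewrite (diag_periodic_IZR _ P2), (diag_periodic_IZR _ P1). apply Hc.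
  - intros M N HMN. destruct (Hm M N HMN) as [eps [He K]]. exists eps. split; [exact He |].
    intros x XM XN Xc.
    replace x with (fun m => (x m - IZR j) + IZR j)
      by (apply functional_extensionality; intros; ring).
    rewrite !action_shift by exact P. apply K.
    + rewrite XM. ring.
    + rewrite XN. ring.
    + intros n Hn. replace (x n - IZR j - q n) with (x n - (q n + IZR j)) by ring.
      apply Xc, Hn.
Qed.

Lemma swept_normal_form W z : isC2 W -> diag_periodic W -> swept W z ->
  exists q n, is_mconfig W q /\ z = (q n, - pd1 W (q n) (q (n + 1)%Z)).
Proof.
  intros HW P [q [Hq [n [j Ez]]]].
  exists (fun m => q m + IZR j), n. split; [apply mconfig_shift |]; assumption.
Qed.

Lemma shift_IZR (f : R * R -> R * R) :
  (forall a p, f (a + 1, p) = (fst (f (a, p)) + 1, snd (f (a, p)))) ->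
  forall m a p, f (a + IZR m, p) = (fst (f (a, p)) + IZR m, snd (f (a, p))).
Proof.
  intros Hf m a p.
  assert (E : (fst (f (a + IZR m, p)) - IZR m, snd (f (a + IZR m, p))) =
               (fst (f (a + 0, p)) - 0, snd (f (a + 0, p)))).
  { apply (periodic_IZR (fun t => (fst (f (a + t, p)) - t, snd (f (a + t, p))))).
    intros t. replace (a + (t + 1)) with (a + t + 1) by ring. rewrite Hf. simpl.
    f_equal. ring. }
  rewrite Rplus_0_r in E. injection E as E1 E2.
  rewrite (surjective_pairing (f (a + IZR m, p))), E2. f_equal. lra.
Qed.

Lemma inverse_shift_IZR (Phi Psi : R * R -> R * R) :
  (forall z, Psi (Phi z) = z) -> (forall w, Phi (Psi w) = w) ->
  (forall a p, Phi (a + 1, p) = (fst (Phi (a, p)) + 1, snd (Phi (a, p)))) ->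
  forall m x y, Psi (x + IZR m, y) = (fst (Psi (x, y)) + IZR m, snd (Psi (x, y))).
Proof.
  intros HPsiPhi HPhiPsi HPhi m x y.
  rewrite <- (HPsiPhi (fst (Psi (x, y)) + IZR m, snd (Psi (x, y)))). f_equal.
  rewrite (shift_IZR Phi HPhi), <- surjective_pairing, HPhiPsi. reflexivity.
Qed.

Definition generates (H : R -> R -> R) (F : R * R -> R * R) := forall q p q' p',
  F (q, p) = (q', p') <-> (p = - pd1 H q q' /\ p' = pd2 H q q').

(* [F] is generated by [G] in the coordinates [Phi], up to the deck shift [k]. *)
Definition generates_in (G : R -> R -> R) (Phi : R * R -> R * R) (k : Z) F := forall z z',
  F z = z' <->
  (snd (Phi z) = - pd1 G (fst (Phi z)) (fst (Phi z') + IZR k) /\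
   snd (Phi z') = pd2 G (fst (Phi z)) (fst (Phi z') + IZR k)).

Lemma generates_transport H G Phi k F :
  generates H F -> generates_in G Phi k F -> gen_transport H G Phi k.
Proof.
  intros HgenH HgenG a b. apply (HgenG (a, - pd1 H a b) (b, pd2 H a b)), HgenH.
  split; reflexivity.
Qed.

Lemma generates_transport_inverse H G Phi Psi k F :
  (forall z, Psi (Phi z) = z) -> (forall w, Phi (Psi w) = w) ->
  (forall a p, Phi (a + 1, p) = (fst (Phi (a, p)) + 1, snd (Phi (a, p)))) ->
  generates H F -> generates_in G Phi k F -> gen_transport G H Psi (- k).
Proof.
  intros HPsiPhi HPhiPsi HPhi HgenH HgenG a b.
  set (z' := (cp1 Psi b (pd2 G a b) + IZR (- k), cp2 Psi b (pd2 G a b))).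
  assert (Pz' : Phi z' = (b + IZR (- k), pd2 G a b)).
  { unfold z', cp1, cp2. rewrite <- (inverse_shift_IZR Phi Psi), HPhiPsi; auto. }
  assert (Fz : F (Psi (a, - pd1 G a b)) = z').
  { apply HgenG. rewrite HPhiPsi, Pz'. simpl.
    replace (b + IZR (- k) + IZR k) with b by (rewrite opp_IZR; ring). split; reflexivity. }
  rewrite (surjective_pairing (Psi _)) in Fz. apply HgenH in Fz. exact Fz.
Qed.

Theorem theorem1p2
  (H G : R -> R -> R)
  (Phi Psi : R * R -> R * R)   (* (q,p) |-> (x,y) and its inverse, on lifts *)
  (F : R * R -> R * R)         (* lift of T in (q,p) coordinates *)
  (k : Z)                      (* lift of T in (x,y) coords is Phi o F o Psi + (k,0) *)
  (* symplectic change of coordinates of the annulus, lifted *)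
  (HPsiPhi : forall z, Psi (Phi z) = z)
  (HPhiPsi : forall w, Phi (Psi w) = w)
  (HPhiC1a : isC1 (cp1 Phi)) (HPhiC1b : isC1 (cp2 Phi))
  (HPsiC1a : isC1 (cp1 Psi)) (HPsiC1b : isC1 (cp2 Psi))
  (HPhi_per : forall q p, Phi (q + 1, p) = (fst (Phi (q, p)) + 1, snd (Phi (q, p))))
  (HPhi_sympl : forall q p,
     pd1 (cp1 Phi) q p * pd2 (cp2 Phi) q p - pd2 (cp1 Phi) q p * pd1 (cp2 Phi) q p = 1)
  (* generating functions *)
  (HC2 : isC2 H) (GC2 : isC2 G)
  (H_per : forall a b, H (a + 1) (b + 1) = H a b)
  (G_per : forall a b, G (a + 1) (b + 1) = G a b)
  (H_twist : forall a b, pd2 (pd1 H) a b > 0)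
  (G_twist : forall a b, pd2 (pd1 G) a b > 0)
  (HgenH : forall q p q' p',
     F (q, p) = (q', p') <-> (p = - pd1 H q q' /\ p' = pd2 H q q'))
  (HgenG : forall z z',
     F z = z' <->
     (snd (Phi z) = - pd1 G (fst (Phi z)) (fst (Phi z') + IZR k) /\
      snd (Phi z') = pd2 G (fst (Phi z)) (fst (Phi z') + IZR k)))
  (* geometric assumption, part 1: d/dy lies in N_H on M_H *)
  (Hgeo_H : forall q : Z -> R, is_mconfig H q -> forall n j : Z,
     let z := (q n + IZR j, - pd1 H (q n + IZR j) (q (n + 1)%Z + IZR j)) in
     let w := Phi z in
     in_N H (q (n - 1)%Z + IZR j) (q n + IZR j) (q (n + 1)%Z + IZR j)
       (pd2 (cp1 Psi) (fst w) (snd w), pd2 (cp2 Psi) (fst w) (snd w)))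
  (* geometric assumption, part 2: d/dp lies in N_G on M_G *)
  (Hgeo_G : forall x : Z -> R, is_mconfig G x -> forall n j : Z,
     let w := (x n + IZR j, - pd1 G (x n + IZR j) (x (n + 1)%Z + IZR j)) in
     let z := Psi w in
     in_N G (x (n - 1)%Z + IZR j) (x n + IZR j) (x (n + 1)%Z + IZR j)
       (pd2 (cp1 Phi) (fst z) (snd z), pd2 (cp2 Phi) (fst z) (snd z))) :
  forall z : R * R, swept H z <-> swept G (Phi z).
Proof.
  assert (ConeH : cone_condition H Phi Psi).
  { intros q Hq n. pose proof (Hgeo_H q Hq n 0%Z) as C. cbv zeta in C.
    rewrite !Rplus_0_r in C. exact C. }
  assert (ConeG : cone_condition G Psi Phi).
  { intros x Hx n. pose proof (Hgeo_G x Hx n 0%Z) as C. cbv zeta in C.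
    rewrite !Rplus_0_r in C. exact C. }
  assert (LinkH : gen_transport H G Phi k) by exact (generates_transport H G Phi k F HgenH HgenG).
  assert (LinkG : gen_transport G H Psi (- k))
    by exact (generates_transport_inverse H G Phi Psi k F HPsiPhi HPhiPsi HPhi_per HgenH HgenG).
  assert (HPsi_area : area_preserving Psi)
    by exact (inverse_area_preserving Phi Psi HPhiPsi HPhiC1a HPhiC1b HPsiC1a HPsiC1b HPhi_sympl).
  intros z. split; intros Hz.
  - destruct (swept_normal_form H z HC2 H_per Hz) as (q & n & Hq & ->).
    apply (swept_transport H G Phi k) with (Psi := Psi); assumption.
  - destruct (swept_normal_form G (Phi z) GC2 G_per Hz) as (x & n & Hx & Ex).
    rewrite <- (HPsiPhi z), Ex.
    apply (swept_transport G H Psi (- k)) with (Psi := Phi); assumption.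
Qed.
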